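(* If $N=2$ and $\mathbf A=\begin{pmatrix}1&1\\1&1\end{pmatrix}$, then there exists a real-valued $f\in V$ such that $\sum_{n\ge1}|\lambda_n(f)|=\infty$.
   Context: $\Sigma_{\mathbf A}^+=\{\omega\in\{1,\dots,N\}^{\mathbb N\cup\{0\}}:\mathbf A(\omega_m\omega_{m+1})=1\ \forall m\}$ with left shift $\sigma_{\mathbf A}$. $\mathrm{var}_m(\phi)=\sup\{|\phi(\omega)-\phi(\omega')|:\omega_k=\omega'_k,\ 0\le k\le m-1\}$; $V=\{\phi:\Sigma_{\mathbf A}^+\to\mathbb C:\mathrm{var}_m(\phi)^{1/m}\to0\}$. Transfer operator $(\mathscr L_f\phi)(\omega)=\sum_{\sigma_{\mathbf A}\omega'=\omega}e^{f(\omega')}\phi(\omega')$ acting on $V$; $\lambda_1(f),\lambda_2(f),\dots$ are its nonzero eigenvalues repeated with multiplicity, ordered by nonincreasing modulus (padded with zeros if finitely many). *)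

From Stdlib Require Import Reals List Arith.
From Coquelicot Require Import Coquelicot.
Open Scope R_scope.

(* Full one-sided shift on N = 2 symbols, A = all-ones matrix, so every
   sequence is admissible.  The alphabet {1,2} is encoded by bool. *)
Definition Sigma2 := nat -> bool.

Definition shift (w : Sigma2) : Sigma2 := fun n => w (S n).
Definition scons (a : bool) (w : Sigma2) : Sigma2 :=
  fun n => match n with O => a | S k => w k end.

Definition agree (m : nat) (w w' : Sigma2) : Prop :=
  forall k, (k < m)%nat -> w k = w' k.

(* phi in V  :<->  var_m(phi)^(1/m) -> 0, written out:
   for every eps > 0, eventually var_m(phi) <= eps^m. *)
Definition in_V (phi : Sigma2 -> C) : Prop :=
  forall eps : R, 0 < eps -> exists m0 : nat, forall m : nat, (m0 <= m)%nat ->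
    forall w w', agree m w w' -> Cmod (Cminus (phi w) (phi w')) <= eps ^ m.

(* transfer operator (L_f phi)(w) = sum_{sigma w' = w} e^{f w'} phi(w') *)
Definition transfer (f : Sigma2 -> R) (phi : Sigma2 -> C) : Sigma2 -> C :=
  fun w => Cplus (Cmult (RtoC (exp (f (scons true w)))) (phi (scons true w)))
                 (Cmult (RtoC (exp (f (scons false w)))) (phi (scons false w))).

Definition transfer_shift (f : Sigma2 -> R) (lam : C) (phi : Sigma2 -> C) : Sigma2 -> C :=
  fun w => Cminus (transfer f phi w) (Cmult lam (phi w)).

Definition gen_eigvec (f : Sigma2 -> R) (lam : C) (phi : Sigma2 -> C) : Prop :=
  in_V phi /\ exists k : nat, forall w, Nat.iter k (transfer_shift f lam) phi w = RtoC 0.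

Definition Csum (m : nat) (g : nat -> C) : C :=
  fold_right (fun i acc => Cplus (g i) acc) (RtoC 0) (seq 0 m).

Definition Rsum (m : nat) (g : nat -> R) : R :=
  fold_right (fun i acc => g i + acc) 0 (seq 0 m).

Definition lin_indep (m : nat) (phis : nat -> Sigma2 -> C) : Prop :=
  forall c : nat -> C,
    (forall w, Csum m (fun i => Cmult (c i) (phis i w)) = RtoC 0) ->
    forall i, (i < m)%nat -> c i = RtoC 0.

(* the algebraic multiplicity of lam as an eigenvalue of L_f on V is >= m *)
Definition mult_ge (f : Sigma2 -> R) (lam : C) (m : nat) : Prop :=
  exists phis : nat -> Sigma2 -> C,
    (forall i, (i < m)%nat -> gen_eigvec f lam (phis i)) /\ lin_indep m phis.

(* sum_n |lambda_n(f)| = +infinity, where the nonzero eigenvalues are counted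
   with algebraic multiplicity: partial sums over finitely many distinct nonzero
   eigenvalues, each weighted by (a lower bound of) its multiplicity, are
   unbounded. *)
Definition sum_abs_eigenvalues_infinite (f : Sigma2 -> R) : Prop :=
  forall M : R, exists (k : nat) (lam : nat -> C) (mu : nat -> nat),
    (forall i j, (i < k)%nat -> (j < k)%nat -> lam i = lam j -> i = j) /\
    (forall i, (i < k)%nat -> lam i <> RtoC 0 /\ mult_ge f (lam i) (mu i)) /\
    M <= Rsum k (fun i => INR (mu i) * Cmod (lam i)).

From Stdlib Require Import Reals List Arith Lia Lra ConstructiveEpsilon ClassicalEpsilon.
From Coquelicot Require Import Coquelicot.
Open Scope R_scope.

(* Write a point as w = true false^n true ... and let n = first_true (shift w).
   For weights b_n -> b_inf >= 1 put f(w) = ln b_n on the cylinder [true] and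
   f = 0 on [false].  A function g of the first visit time of true satisfies
   L_f g = g / t exactly when its profile G obeys the renewal equation
   b_n G(0) + G(n+1) = G(n) / t.  Choosing b_n = -Q_{n+1}(1), where Q_n are the
   Taylor partial sums of the entire function q(x) = (1 - 12 x) cos x, the
   profile G(n) = t^-n Q_n(t) - t Q_n(1) solves this for every t <> 0, and it
   converges superexponentially (so g is in V) whenever q(t) = 0.  Hence every
   1/t_k with t_k = pi/2 + k pi is an eigenvalue, and sum_k 1/t_k diverges. *)

Lemma pow_le_one e n : 0 <= e <= 1 -> e ^ n <= 1.
Proof.
  intros He. induction n as [|n IH]; simpl; [lra|].
  assert (0 <= e ^ n) by (apply pow_le; lra). nra.
Qed.

Lemma pow_le_antimono e m n : 0 <= e <= 1 -> (m <= n)%nat -> e ^ n <= e ^ m.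
Proof.
  intros He Hmn. replace n with (m + (n - m))%nat by lia. rewrite pow_add.
  assert (0 <= e ^ m) by (apply pow_le; lra).
  assert (e ^ (n - m) <= 1) by (apply pow_le_one; lra). nra.
Qed.

(* For a factor K >= 1 and n >= 1, K * (e/K)^n <= e^n: a constant factor can be
   absorbed by shrinking the base of the comparison power. *)
Lemma scaled_pow_le K e n : 1 <= K -> 0 <= e -> (1 <= n)%nat -> K * (e / K) ^ n <= e ^ n.
Proof.
  intros HK He Hn. unfold Rdiv. rewrite Rpow_mult_distr.
  replace n with (S (n - 1)) at 2 by lia. simpl.
  assert (HK1 : 0 < / K <= 1).
  { split. apply Rinv_0_lt_compat; lra. rewrite <- Rinv_1. apply Rinv_le_contravar; lra. }
  assert ((/ K) ^ (n - 1) <= 1) by (apply pow_le_one; lra).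
  assert (0 <= (/ K) ^ (n - 1)) by (apply pow_le; lra).
  assert (0 <= e ^ n) by (apply pow_le; lra).
  replace (K * (e ^ n * (/ K * (/ K) ^ (n - 1)))) with (e ^ n * (/ K) ^ (n - 1) * (K * / K)) by ring.
  rewrite Rinv_r by lra. nra.
Qed.

Definition superexp (u : nat -> R) : Prop :=
  forall eps, 0 < eps -> exists N, forall n, (N <= n)%nat -> Rabs (u n) <= eps ^ n.

Lemma superexp_intro u :
  (forall eps, 0 < eps < 1 -> exists N, forall n, (N <= n)%nat -> Rabs (u n) <= eps ^ n) ->
  superexp u.
Proof.
  intros H eps He. destruct (H (Rmin eps (1/2))) as [N HN].
  { split. apply Rmin_pos; lra. pose proof (Rmin_r eps (1/2)). lra. }
  exists N. intros n Hn. eapply Rle_trans. apply HN; auto.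
  apply pow_incr. split. left; apply Rmin_pos; lra. apply Rmin_l.
Qed.

Lemma superexp_le u v :
  superexp u -> (exists N, forall n, (N <= n)%nat -> Rabs (v n) <= Rabs (u n)) -> superexp v.
Proof.
  intros Hu [N0 H0] eps He. destruct (Hu eps He) as [N HN]. exists (max N N0).
  intros n Hn. eapply Rle_trans. apply H0; lia. apply HN; lia.
Qed.

Lemma superexp_ext u v : (forall n, u n = v n) -> superexp u -> superexp v.
Proof. intros H Hu. apply (superexp_le u); auto. exists O. intros n _. rewrite H. lra. Qed.

Lemma superexp_plus u v : superexp u -> superexp v -> superexp (fun n => u n + v n).
Proof.
  intros Hu Hv eps He.
  destruct (Hu (eps / 2)) as [N1 H1]; [lra|]. destruct (Hv (eps / 2)) as [N2 H2]; [lra|].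
  exists (max 1 (max N1 N2)). intros n Hn.
  eapply Rle_trans. apply Rabs_triang.
  assert (Rabs (u n) <= (eps / 2) ^ n) by (apply H1; lia).
  assert (Rabs (v n) <= (eps / 2) ^ n) by (apply H2; lia).
  assert (2 * (eps / 2) ^ n <= eps ^ n) by (apply scaled_pow_le; lra || lia).
  lra.
Qed.

Lemma superexp_scal c u : superexp u -> superexp (fun n => c * u n).
Proof.
  intros Hu eps He. set (K := Rabs c + 1). pose proof (Rabs_pos c).
  destruct (Hu (eps / K)) as [N HN]. { apply Rdiv_lt_0_compat; unfold K; lra. }
  exists (max 1 N). intros n Hn. rewrite Rabs_mult.
  assert (Rabs (u n) <= (eps / K) ^ n) by (apply HN; lia).
  assert (K * (eps / K) ^ n <= eps ^ n) by (apply scaled_pow_le; unfold K; lra || lia).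
  pose proof (Rabs_pos (u n)). unfold K in *. nra.
Qed.

Lemma superexp_geom_mult r u : superexp u -> superexp (fun n => r ^ n * u n).
Proof.
  intros Hu eps He. set (K := Rabs r + 1). pose proof (Rabs_pos r).
  destruct (Hu (eps / K)) as [N HN]. { apply Rdiv_lt_0_compat; unfold K; lra. }
  exists N. intros n Hn. rewrite Rabs_mult, <- RPow_abs.
  assert (Rabs (u n) <= (eps / K) ^ n) by (apply HN; lia).
  assert (Rabs r ^ n * (eps / K) ^ n <= eps ^ n).
  { rewrite <- Rpow_mult_distr. apply pow_incr. split.
    - apply Rmult_le_pos; [lra|]. apply Rmult_le_pos; [lra|]. left; apply Rinv_0_lt_compat; unfold K; lra.
    - unfold Rdiv, K. apply (Rmult_le_reg_r (Rabs r + 1)); [lra|].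
      field_simplify; lra. }
  assert (0 <= Rabs r ^ n) by (apply pow_le; lra).
  pose proof (Rabs_pos (u n)). nra.
Qed.

Lemma superexp_shift u : superexp u -> superexp (fun n => u (S n)).
Proof.
  intros Hu. apply superexp_intro. intros eps He. destruct (Hu eps) as [N H]; [lra|].
  exists N. intros n Hn. eapply Rle_trans. apply H. lia. apply pow_le_antimono; lra || lia.
Qed.

Lemma superexp_unshift u : superexp (fun n => u (S n)) -> superexp u.
Proof.
  intros Hu. apply superexp_intro. intros eps He.
  destruct (Hu (eps * eps)) as [N H]; [nra|].
  exists (S (max N 1)). intros [|n] Hn; [lia|].
  eapply Rle_trans. apply H. lia. rewrite Rpow_mult_distr, <- pow_add.
  apply pow_le_antimono; lra || lia.
Qed.

Definition psum (c : nat -> R) (n : nat) (x : R) : R := sum_f_R0 (fun j => c j * x ^ j) n.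

(* |x|^j / j!, the majorant of the j-th term of a series with |c_j| <= 1/j!. *)
Definition fact_term (x : R) (j : nat) : R := Rabs x ^ j / INR (fact j).

Lemma fact_term_nonneg x j : 0 <= fact_term x j.
Proof.
  unfold fact_term. apply Rmult_le_pos. apply pow_le, Rabs_pos.
  left; apply Rinv_0_lt_compat, lt_0_INR, lt_O_fact.
Qed.

Lemma fact_term_step x j : 2 * Rabs x <= INR (S j) -> fact_term x (S j) <= fact_term x j / 2.
Proof.
  intros Hj. unfold fact_term. rewrite fact_simpl, mult_INR. simpl pow.
  assert (0 < INR (fact j)) by (apply lt_0_INR, lt_O_fact).
  assert (0 < INR (S j)) by (apply lt_0_INR; lia).
  assert (0 <= Rabs x ^ j / INR (fact j)).
  { apply Rmult_le_pos. apply pow_le, Rabs_pos. left; apply Rinv_0_lt_compat; lra. }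
  replace (Rabs x * Rabs x ^ j / (INR (S j) * INR (fact j)))
    with (Rabs x / INR (S j) * (Rabs x ^ j / INR (fact j))) by (field; lra).
  assert (Rabs x / INR (S j) <= / 2).
  { apply (Rmult_le_reg_r (INR (S j))); auto. field_simplify; lra. }
  nra.
Qed.

Lemma fact_term_superexp x : superexp (fact_term x).
Proof.
  intros eps He. destruct (cv_speed_pow_fact (Rabs x / eps) 1) as [N HN]; [lra|].
  exists N. intros n Hn. specialize (HN n Hn). unfold Rdist in HN.
  rewrite Rminus_0_r, Rabs_pos_eq in HN.
  2:{ apply Rmult_le_pos. apply pow_le, Rmult_le_pos. apply Rabs_pos.
      left; apply Rinv_0_lt_compat; lra. left; apply Rinv_0_lt_compat, lt_0_INR, lt_O_fact. }
  rewrite Rabs_pos_eq by apply fact_term_nonneg. unfold fact_term.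
  assert (0 < eps ^ n) by (apply pow_lt; lra).
  unfold Rdiv in *. rewrite Rpow_mult_distr, pow_inv in HN.
  apply (Rmult_le_reg_r (/ eps ^ n)). apply Rinv_0_lt_compat; auto.
  rewrite Rinv_r by lra. left.
  replace (Rabs x ^ n * / INR (fact n) * / eps ^ n)
    with (Rabs x ^ n * / eps ^ n * / INR (fact n)) by ring. exact HN.
Qed.

Section FactorialSeries.

Variable c : nat -> R.
Hypothesis c_bound : forall j, Rabs (c j) <= / INR (fact j).

Lemma term_le_fact_term x j : Rabs (c j * x ^ j) <= fact_term x j.
Proof.
  rewrite Rabs_mult, <- RPow_abs. unfold fact_term, Rdiv. rewrite Rmult_comm.
  apply Rmult_le_compat_l. apply pow_le, Rabs_pos. apply c_bound.
Qed.

(* Past index 2|x|, the block of terms n+1 .. n+k telescopes under the geometric decay. *)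
Lemma psum_block x n k : 2 * Rabs x <= INR (S n) ->
  Rabs (psum c (n + k) x - psum c n x) <= 2 * fact_term x (S n) - 2 * fact_term x (S (n + k)).
Proof.
  intros Hn. induction k as [|k IH].
  - rewrite Nat.add_0_r, Rminus_diag, Rabs_R0. lra.
  - replace (n + S k)%nat with (S (n + k)) by lia. unfold psum at 1. rewrite tech5.
    fold (psum c (n + k) x).
    replace (psum c (n + k) x + c (S (n + k)) * x ^ S (n + k) - psum c n x)
      with ((psum c (n + k) x - psum c n x) + c (S (n + k)) * x ^ S (n + k)) by ring.
    eapply Rle_trans. apply Rabs_triang.
    pose proof (term_le_fact_term x (S (n + k))).
    assert (fact_term x (S (S (n + k))) <= fact_term x (S (n + k)) / 2).
    { apply fact_term_step. rewrite !S_INR, plus_INR in *. pose proof (pos_INR k). lra. }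
    lra.
Qed.

Lemma psum_tail x n m : 2 * Rabs x <= INR (S n) -> (n <= m)%nat ->
  Rabs (psum c m x - psum c n x) <= 2 * fact_term x (S n).
Proof.
  intros Hn Hm. replace m with (n + (m - n))%nat by lia.
  pose proof (psum_block x n (m - n) Hn). pose proof (fact_term_nonneg x (S (n + (m - n)))). lra.
Qed.

(* The same bound for the sum L of the series (given as the limit of a subsequence
   of partial sums). *)
Variable h : nat -> nat.
Hypothesis h_ge : forall N, (N <= h N)%nat.

Lemma series_tail x L : Un_cv (fun N => psum c (h N) x) L ->
  forall n, 2 * Rabs x <= INR (S n) -> Rabs (L - psum c n x) <= 2 * fact_term x (S n).
Proof.
  intros HL n Hn. apply Rle_plus_epsilon. intros e He.
  destruct (HL e He) as [N HN]. set (m := max N n).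
  specialize (HN m ltac:(lia)). unfold Rdist in HN.
  replace (L - psum c n x) with ((psum c (h m) x - psum c n x) - (psum c (h m) x - L)) by ring.
  eapply Rle_trans. apply Rabs_triang. rewrite Rabs_Ropp.
  assert (Rabs (psum c (h m) x - psum c n x) <= 2 * fact_term x (S n)).
  { apply psum_tail; auto. specialize (h_ge m). lia. }
  lra.
Qed.

Lemma series_tail_superexp x L : Un_cv (fun N => psum c (h N) x) L ->
  superexp (fun n => L - psum c n x).
Proof.
  intros HL. apply (superexp_le (fact_term x)); [apply fact_term_superexp|].
  destruct (INR_unbounded (2 * Rabs x)) as [N HN].
  exists N. intros n Hn. apply le_INR in Hn.
  rewrite (Rabs_pos_eq (fact_term x n)) by apply fact_term_nonneg.
  eapply Rle_trans. apply (series_tail x L HL). rewrite S_INR; lra.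
  assert (fact_term x (S n) <= fact_term x n / 2) by (apply fact_term_step; rewrite S_INR; lra).
  lra.
Qed.

End FactorialSeries.

Definition cos_coef (j : nat) : R :=
  if Nat.even j then (-1) ^ Nat.div2 j / INR (fact j) else 0.

Lemma cos_coef_even i : cos_coef (2 * i) = cos_n i.
Proof. unfold cos_coef, cos_n. rewrite Nat.even_even, Nat.div2_double. reflexivity. Qed.

Lemma cos_coef_odd i : cos_coef (S (2 * i)) = 0.
Proof. unfold cos_coef. replace (S (2 * i)) with (2 * i + 1)%nat by lia. rewrite Nat.even_odd. reflexivity. Qed.

Lemma cos_coef_bound j : Rabs (cos_coef j) <= / INR (fact j).
Proof.
  unfold cos_coef. destruct (Nat.even j).
  - unfold Rdiv. rewrite Rabs_mult, pow_1_abs, Rabs_inv, Rabs_pos_eq by apply pos_INR. lra.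
  - rewrite Rabs_R0. left. apply Rinv_0_lt_compat, lt_0_INR, lt_O_fact.
Qed.

Lemma psum_cos_odd N x :
  psum cos_coef (S (2 * N)) x = sum_f_R0 (fun i => cos_n i * (Rsqr x) ^ i) N.
Proof.
  unfold psum. induction N as [|N IH].
  - simpl. unfold cos_coef, cos_n. simpl. ring.
  - replace (S (2 * S N)) with (S (S (S (2 * N)))) by lia. do 2 rewrite tech5. rewrite IH, tech5.
    replace (S (S (2 * N))) with (2 * S N)%nat by lia. rewrite cos_coef_even.
    replace (S (2 * S N)) with (S (S (S (2 * N)))) by lia.
    replace (S (S (S (2 * N)))) with (S (2 * S N)) by lia. rewrite cos_coef_odd.
    unfold Rsqr. rewrite Rpow_mult_distr, <- pow_add.
    replace (S N + S N)%nat with (2 * S N)%nat by lia. ring.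
Qed.

Lemma cos_cv x : Un_cv (fun N => psum cos_coef (S (2 * N)) x) (cos x).
Proof.
  unfold cos. destruct (exist_cos (Rsqr x)) as [l Hl]. unfold cos_in, infinite_sum in Hl.
  intros e He. destruct (Hl e He) as [N HN]. exists N. intros n Hn.
  rewrite psum_cos_odd. apply HN; auto.
Qed.

Lemma cos_tail x n : 2 * Rabs x <= INR (S n) ->
  Rabs (cos x - psum cos_coef n x) <= 2 * fact_term x (S n).
Proof.
  apply (series_tail cos_coef cos_coef_bound (fun N => S (2 * N))); [intros; lia|apply cos_cv].
Qed.

Lemma cos_tail_superexp x : superexp (fun n => cos x - psum cos_coef n x).
Proof.
  apply (series_tail_superexp cos_coef cos_coef_bound (fun N => S (2 * N))); [intros; lia|apply cos_cv].
Qed.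

(* The entire function q(x) = (1 - kappa x) cos x, kappa = 12, whose zeros
   pi/2 + k pi will give the eigenvalues; q_coef are its Taylor coefficients. *)
Definition kappa : R := 12.
Definition q (x : R) : R := (1 - kappa * x) * cos x.
Definition q_coef (j : nat) : R :=
  match j with O => 1 | S i => cos_coef (S i) - kappa * cos_coef i end.

Lemma psum_q_S n x : psum q_coef (S n) x = psum cos_coef (S n) x - kappa * x * psum cos_coef n x.
Proof.
  unfold psum. induction n as [|n IH].
  - simpl. unfold cos_coef. simpl. field.
  - rewrite tech5, IH, (tech5 _ (S n)), (tech5 _ n). simpl q_coef. simpl pow. ring.
Qed.

Lemma q_tail_superexp x : superexp (fun n => q x - psum q_coef n x).
Proof.
  apply superexp_unshift.
  apply (superexp_ext (fun n => (cos x - psum cos_coef (S n) x) + (- (kappa * x)) * (cos x - psum cos_coef n x))).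
  { intros n. rewrite psum_q_S. unfold q. ring. }
  apply superexp_plus; [apply (superexp_shift (fun n => cos x - psum cos_coef n x))|apply superexp_scal];
    apply cos_tail_superexp.
Qed.

(* Numerical control at x = 1: all partial sums and cos 1 lie in [1/6, 1]. *)
Lemma fact_term_1_3 : fact_term 1 3 = 1 / 6.
Proof. unfold fact_term. rewrite Rabs_R1. simpl. lra. Qed.

Lemma psum_cos_2 : psum cos_coef 2 1 = 1 / 2.
Proof. unfold psum, cos_coef. simpl. lra. Qed.

Lemma psum_cos_1_bounds m : 1 / 6 <= psum cos_coef m 1 <= 1.
Proof.
  destruct m as [|[|m]]; try (unfold psum, cos_coef; simpl; lra).
  pose proof (psum_tail cos_coef cos_coef_bound 1 2 (S (S m))) as H.
  rewrite psum_cos_2, fact_term_1_3, Rabs_R1 in H.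
  assert (Rabs (psum cos_coef (S (S m)) 1 - 1 / 2) <= 2 * (1 / 6)) by (apply H; simpl; lra || lia).
  apply Rabs_le_between in H0. lra.
Qed.

Lemma cos_1_bounds : 1 / 6 <= cos 1 <= 5 / 6.
Proof.
  pose proof (cos_tail 1 2) as H. rewrite psum_cos_2, fact_term_1_3, Rabs_R1 in H.
  assert (Rabs (cos 1 - 1 / 2) <= 2 * (1 / 6)) by (apply H; simpl; lra).
  apply Rabs_le_between in H0. lra.
Qed.

(* The weights b_n = -Q_{n+1}(1) of the potential and their limit b_inf = -q(1);
   kappa is chosen large enough that they are all >= 1. *)
Definition b (n : nat) : R := - psum q_coef (S n) 1.
Definition b_inf : R := - q 1.

Lemma b_ge1 n : 1 <= b n.
Proof.
  unfold b. rewrite psum_q_S. pose proof (psum_cos_1_bounds (S n)). pose proof (psum_cos_1_bounds n).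
  unfold kappa. lra.
Qed.

Lemma b_inf_ge1 : 1 <= b_inf.
Proof. unfold b_inf, q, kappa. pose proof cos_1_bounds. lra. Qed.

Definition first_true (w : Sigma2) : option nat :=
  match excluded_middle_informative (exists n, w n = true) with
  | left H => Some (proj1_sig (epsilon_smallest (fun n => w n = true)
                                 (fun n => Bool.bool_dec (w n) true) H))
  | right _ => None
  end.

Lemma first_true_spec w :
  (exists n, first_true w = Some n /\ w n = true /\ forall k, (k < n)%nat -> w k = false)
  \/ (first_true w = None /\ forall k, w k = false).
Proof.
  unfold first_true. destruct (excluded_middle_informative _) as [H|H].
  - left. destruct (epsilon_smallest _ _ H) as [m [Hm1 Hm2]]. simpl. exists m. repeat split; auto.
    intros k Hk. destruct (w k) eqn:E; auto. specialize (Hm2 k E). lia.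
  - right. split; auto. intros k. destruct (w k) eqn:E; auto. exfalso; apply H; eauto.
Qed.

Lemma first_true_some w n :
  w n = true -> (forall k, (k < n)%nat -> w k = false) -> first_true w = Some n.
Proof.
  intros H1 H2. destruct (first_true_spec w) as [[m [E [Hm1 Hm2]]]|[E Hw]].
  - rewrite E. f_equal. destruct (Nat.lt_trichotomy m n) as [h|[h|h]]; auto.
    + rewrite H2 in Hm1; auto; discriminate.
    + rewrite Hm2 in H1; auto; discriminate.
  - rewrite Hw in H1; discriminate.
Qed.

Lemma first_true_none w : (forall k, w k = false) -> first_true w = None.
Proof.
  intros H. destruct (first_true_spec w) as [[m [E [Hm _]]]|[E _]]; auto.
  rewrite H in Hm; discriminate.
Qed.

Lemma first_true_scons_true w : first_true (scons true w) = Some 0%nat.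
Proof. apply first_true_some. reflexivity. intros; lia. Qed.

Lemma first_true_scons_false w : first_true (scons false w) = option_map S (first_true w).
Proof.
  destruct (first_true_spec w) as [[m [E [Hm1 Hm2]]]|[E Hw]]; rewrite E; simpl.
  - apply first_true_some. exact Hm1. intros [|k] Hk; simpl; auto. apply Hm2. lia.
  - apply first_true_none. intros [|k]; simpl; auto.
Qed.

(* o is at least m, where None counts as infinity. *)
Definition opt_ge (m : nat) (o : option nat) : Prop :=
  match o with Some n => (m <= n)%nat | None => True end.

Lemma first_true_agree m w w' : agree m w w' ->
  first_true w = first_true w' \/ (opt_ge m (first_true w) /\ opt_ge m (first_true w')).
Proof.
  intros Ha.
  destruct (first_true_spec w) as [[n [E [Hn1 Hn2]]]|[E Hw]];
  destruct (first_true_spec w') as [[n' [E' [Hn1' Hn2']]]|[E' Hw']]; rewrite E, E'; simpl.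
  - destruct (Nat.lt_ge_cases n m).
    + left. rewrite <- E'. symmetry. apply first_true_some. rewrite <- Ha; auto.
      intros k Hk. rewrite <- Ha by lia. auto.
    + destruct (Nat.lt_ge_cases n' m); [|right; auto].
      left. rewrite <- E. apply first_true_some. rewrite Ha; auto. intros k Hk. rewrite Ha by lia. auto.
  - destruct (Nat.lt_ge_cases n m); [|right; auto].
    rewrite Ha, Hw' in Hn1 by auto. discriminate.
  - destruct (Nat.lt_ge_cases n' m); [|right; auto].
    rewrite <- Ha, Hw in Hn1' by auto. discriminate.
  - left; auto.
Qed.

Lemma Cmod_RtoC_minus x y : Cmod (Cminus (RtoC x) (RtoC y)) = Rabs (x - y).
Proof. rewrite <- RtoC_minus. apply Cmod_R. Qed.

Lemma in_V_first_true (G : option nat -> R) :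
  superexp (fun n => G (Some n) - G None) -> in_V (fun w => RtoC (G (first_true w))).
Proof.
  intros HG eps He. set (e := Rmin eps 1 / 2).
  assert (Hmin : 0 < Rmin eps 1) by (apply Rmin_pos; lra).
  assert (He0 : 0 < e) by (unfold e; lra).
  assert (He1 : e <= 1) by (unfold e; pose proof (Rmin_r eps 1); lra).
  destruct (HG e He0) as [N HN]. exists (max N 1). intros m Hm w w' Ha.
  rewrite Cmod_RtoC_minus.
  assert (Hclose : forall o, opt_ge m o -> Rabs (G o - G None) <= e ^ m).
  { intros [n|] Ho; simpl in Ho.
    - eapply Rle_trans. apply HN. lia. apply pow_le_antimono; lra || auto.
    - rewrite Rminus_diag, Rabs_R0. apply pow_le; lra. }
  assert (Hsum : 2 * e ^ m <= eps ^ m).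
  { eapply Rle_trans. apply (scaled_pow_le 2 (Rmin eps 1)); lra || lia.
    apply pow_incr. split. lra. apply Rmin_l. }
  destruct (first_true_agree m w w' Ha) as [Eq|[H1 H2]].
  - rewrite Eq, Rminus_diag, Rabs_R0. apply pow_le; lra.
  - replace (G (first_true w) - G (first_true w'))
      with ((G (first_true w) - G None) - (G (first_true w') - G None)) by ring.
    eapply Rle_trans. apply Rabs_triang. rewrite Rabs_Ropp.
    pose proof (Hclose _ H1). pose proof (Hclose _ H2). lra.
Qed.

Lemma in_V_cylinder (phi : Sigma2 -> R) : in_V (fun w => RtoC (phi w)) ->
  in_V (fun w => RtoC (if w 0%nat then phi (shift w) else 0)).
Proof.
  intros H eps He. set (e := Rmin eps (1 / 2)).
  assert (He0 : 0 < e) by (unfold e; apply Rmin_pos; lra).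
  assert (He1 : e <= 1) by (unfold e; pose proof (Rmin_r eps (1 / 2)); lra).
  destruct (H (e * e)) as [m0 Hm0]; [nra|].
  exists (S (max m0 1)). intros [|m] Hm w w' Ha; [lia|].
  assert (E0 : w 0%nat = w' 0%nat) by (apply Ha; lia).
  assert (Ha' : agree m (shift w) (shift w')) by (intros k Hk; unfold shift; apply Ha; lia).
  rewrite <- E0. destruct (w 0%nat).
  - eapply Rle_trans. apply (Hm0 m); [lia|auto].
    rewrite Rpow_mult_distr, <- pow_add. eapply Rle_trans.
    apply (pow_le_antimono e (S m)); lra || lia.
    apply pow_incr. split. lra. apply Rmin_l.
  - rewrite Cmod_RtoC_minus, Rminus_diag, Rabs_R0. apply pow_le; lra.
Qed.

Definition weight (o : option nat) : R := match o with Some n => b n | None => b_inf end.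

Lemma weight_ge1 o : 1 <= weight o.
Proof. destruct o; simpl; [apply b_ge1|apply b_inf_ge1]. Qed.

Definition potential (w : Sigma2) : R := if w 0%nat then ln (weight (first_true (shift w))) else 0.

Lemma ln_le_pred z : 0 < z -> ln z <= z - 1.
Proof.
  intros Hz. rewrite <- (ln_exp (z - 1)). apply ln_le; auto.
  pose proof (exp_ineq1_le (z - 1)). lra.
Qed.

Lemma ln_lipschitz x y : 1 <= x -> 1 <= y -> Rabs (ln x - ln y) <= Rabs (x - y).
Proof.
  assert (Hle : forall a c, 1 <= c -> c <= a -> ln a - ln c <= a - c).
  { intros a c Hc Hca. rewrite <- ln_div by lra. eapply Rle_trans.
    apply ln_le_pred, Rdiv_lt_0_compat; lra.
    apply (Rmult_le_reg_r c); [lra|]. unfold Rdiv. field_simplify; nra. }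
  intros Hx Hy. destruct (Rle_dec y x).
  - assert (ln y <= ln x) by (apply ln_le; lra). rewrite !Rabs_pos_eq by lra. auto.
  - assert (ln x <= ln y) by (apply ln_le; lra). rewrite !Rabs_left1 by lra.
    assert (ln y - ln x <= y - x) by (apply Hle; lra). lra.
Qed.

Lemma potential_in_V : in_V (fun w => RtoC (potential w)).
Proof.
  apply (in_V_cylinder (fun w => ln (weight (first_true w)))).
  apply (in_V_first_true (fun o => ln (weight o))).
  apply (superexp_le (fun n => q 1 - psum q_coef (S n) 1)).
  - apply (superexp_shift (fun n => q 1 - psum q_coef n 1)), q_tail_superexp.
  - exists O. intros n _. simpl. eapply Rle_trans. apply ln_lipschitz; [apply (weight_ge1 (Some n))|apply (weight_ge1 None)].
    right. f_equal. unfold weight, b, b_inf. ring.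
Qed.

(* Candidate eigenfunctions for the eigenvalue 1/t: functions of the first visit
   time with profile t^-n Q_n(t) - t Q_n(1), where Q_n = psum d n is the n-th
   partial sum of a power series with constant term 1. *)
Definition profile (d : nat -> R) (t : R) (n : nat) : R := (/ t) ^ n * psum d n t - t * psum d n 1.

Lemma profile_0 d t : d O = 1 -> profile d t 0 = 1 - t.
Proof. intros Hd. unfold profile, psum. simpl. rewrite Hd. ring. Qed.

(* The renewal equation behind the eigenvalue equation, valid for every t <> 0. *)
Lemma profile_renewal d t n : d O = 1 -> t <> 0 ->
  - psum d (S n) 1 * profile d t 0 + profile d t (S n) = / t * profile d t n.
Proof.
  intros Hd Ht. rewrite profile_0 by auto. unfold profile, psum. rewrite !tech5, pow1.
  fold (psum d n t) (psum d n 1). simpl pow.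
  assert (Htn : (/ t) ^ n * t ^ n = 1) by (rewrite <- Rpow_mult_distr, Rinv_l by auto; apply pow1).
  replace (/ t * (/ t) ^ n * (psum d n t + d (S n) * (t * t ^ n)))
    with (/ t * (/ t) ^ n * psum d n t + d (S n) * ((/ t) ^ n * t ^ n) * (/ t * t)) by ring.
  rewrite Htn, Rinv_l by auto. field; auto.
Qed.

(* The eigenfunction for q: its value at infinity, t b_inf = -t q(1), is the limit
   of the profile when q(t) = 0. *)
Definition eig_value (t : R) (o : option nat) : R :=
  match o with Some n => profile q_coef t n | None => t * b_inf end.

Definition eigfun (t : R) (w : Sigma2) : C := RtoC (eig_value t (first_true w)).

Lemma eigfun_equation t w : t <> 0 -> transfer_shift potential (RtoC (/ t)) (eigfun t) w = RtoC 0.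
Proof.
  intros Ht. unfold transfer_shift, transfer, eigfun.
  rewrite <- !RtoC_mult, <- RtoC_plus, <- RtoC_minus. f_equal.
  change (potential (scons true w)) with (ln (weight (first_true w))).
  change (potential (scons false w)) with 0.
  rewrite exp_ln by (pose proof (weight_ge1 (first_true w)); lra). rewrite exp_0.
  rewrite first_true_scons_true, first_true_scons_false.
  destruct (first_true w) as [n|]; simpl.
  - rewrite <- (profile_renewal q_coef) by auto. unfold b. ring.
  - rewrite profile_0 by auto. field. auto.
Qed.

Lemma eigfun_in_V t : q t = 0 -> in_V (eigfun t).
Proof.
  intros Hq. apply in_V_first_true. simpl.
  apply (superexp_ext (fun n => (-1) * ((/ t) ^ n * (q t - psum q_coef n t)) + t * (q 1 - psum q_coef n 1))).
  { intros n. unfold profile, b_inf. rewrite Hq. ring. }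
  apply superexp_plus; [apply superexp_scal, superexp_geom_mult|apply superexp_scal];
    apply q_tail_superexp.
Qed.

Lemma eigfun_nonzero t : t <> 1 -> eigfun t (fun _ => true) <> RtoC 0.
Proof.
  intros Ht E. unfold eigfun in E. rewrite (first_true_some _ 0) in E by (auto; intros; lia).
  simpl in E. rewrite profile_0 in E by reflexivity. apply RtoC_inj in E. lra.
Qed.

Definition zero_q (k : nat) : R := PI / 2 + INR k * PI.

Lemma zero_q_gt1 k : 1 < zero_q k.
Proof. unfold zero_q. pose proof PI2_3_2. pose proof (pos_INR k). pose proof PI_RGT_0. nra. Qed.

Lemma zero_q_le k : zero_q k <= 4 * INR (S k).
Proof. unfold zero_q. rewrite S_INR. pose proof PI_4. pose proof (pos_INR k). pose proof PI_RGT_0. nra. Qed.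

Lemma q_zero_q k : q (zero_q k) = 0.
Proof.
  unfold q. rewrite cos_eq_0_1. ring. exists (Z.of_nat k). unfold zero_q. rewrite <- INR_IZR_INZ. ring.
Qed.

Lemma zero_q_inj i j : zero_q i = zero_q j -> i = j.
Proof. unfold zero_q. intros E. pose proof PI_RGT_0. apply INR_eq. nra. Qed.

Lemma mult_ge_1 f lam phi w0 : in_V phi ->
  (forall w, transfer_shift f lam phi w = RtoC 0) -> phi w0 <> RtoC 0 -> mult_ge f lam 1.
Proof.
  intros HV Heig Hw0. exists (fun _ => phi). split.
  - intros i _. split; [exact HV|]. exists 1%nat. exact Heig.
  - intros c Hc i Hi. replace i with O by lia. specialize (Hc w0). unfold Csum in Hc. simpl in Hc.
    rewrite Cplus_0_r in Hc.
    rewrite <- (Cmult_1_r (c O)), <- (Cinv_r _ Hw0), Cmult_assoc, Hc. apply Cmult_0_l.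
Qed.

Lemma Rsum_S m g : Rsum (S m) g = Rsum m g + g m.
Proof.
  unfold Rsum. rewrite seq_S, fold_right_app. simpl. rewrite Rplus_0_r.
  generalize (g m). induction (seq 0 m) as [|i l IH]; intros a; simpl; [ring|]. rewrite IH. ring.
Qed.

Lemma Rsum_le m g h : (forall i, (i < m)%nat -> g i <= h i) -> Rsum m g <= Rsum m h.
Proof.
  induction m as [|m IH]; intros H; [unfold Rsum; simpl; lra|].
  rewrite !Rsum_S. assert (g m <= h m) by (apply H; lia).
  assert (Rsum m g <= Rsum m h) by (apply IH; intros; apply H; lia). lra.
Qed.

Lemma harmonic_ge_ln c K : 0 <= c -> c * ln (INR (S K)) <= Rsum K (fun i => c / INR (S i)).
Proof.
  intros Hc. induction K as [|K IH].
  - unfold Rsum. simpl. rewrite ln_1. lra.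
  - rewrite Rsum_S.
    assert (0 < INR (S K)) by (apply lt_0_INR; lia).
    assert (ln (INR (S (S K))) - ln (INR (S K)) <= / INR (S K)).
    { rewrite <- ln_div by (try apply lt_0_INR; lia).
      eapply Rle_trans. apply ln_le_pred, Rdiv_lt_0_compat; auto. apply lt_0_INR; lia.
      rewrite (S_INR (S K)). right. field. lra. }
    unfold Rdiv. nra.
Qed.

Lemma sum_abs_infinite_of_harmonic f (lam : nat -> C) c : 0 < c ->
  (forall i j, lam i = lam j -> i = j) ->
  (forall i, lam i <> RtoC 0 /\ mult_ge f (lam i) 1) ->
  (forall i, c / INR (S i) <= Cmod (lam i)) ->
  sum_abs_eigenvalues_infinite f.
Proof.
  intros Hc Hinj Heig Hbig M.
  destruct (INR_unbounded (exp (M / c))) as [K HK].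
  exists K, lam, (fun _ => 1%nat). split; [|split].
  - intros i j _ _. apply Hinj.
  - intros i _. apply Heig.
  - assert (HlnK : M / c <= ln (INR (S K))).
    { rewrite <- (ln_exp (M / c)). apply ln_le. apply exp_pos. rewrite S_INR. lra. }
    apply Rle_trans with (c * ln (INR (S K))).
    { apply (Rmult_le_reg_r (/ c)). apply Rinv_0_lt_compat; lra.
      replace (c * ln (INR (S K)) * / c) with (ln (INR (S K))) by (field; lra). exact HlnK. }
    eapply Rle_trans. apply harmonic_ge_ln; lra.
    apply Rsum_le. intros i _. rewrite Rmult_1_l. apply Hbig.
Qed.

Theorem theoremA2 :
  exists f : Sigma2 -> R,
    in_V (fun w => RtoC (f w)) /\ sum_abs_eigenvalues_infinite f.
Proof.
  exists potential. split; [exact potential_in_V|].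
  apply (sum_abs_infinite_of_harmonic potential (fun k => RtoC (/ zero_q k)) (/ 4)); [lra| | |].
  - intros i j E. apply RtoC_inj, Rinv_eq_reg, zero_q_inj in E. exact E.
  - intros k. pose proof (zero_q_gt1 k). split.
    + intros E. apply RtoC_inj in E. apply Rinv_neq_0_compat in E; lra.
    + apply (mult_ge_1 _ _ (eigfun (zero_q k)) (fun _ => true)).
      * apply eigfun_in_V, q_zero_q.
      * intros w. apply eigfun_equation. lra.
      * apply eigfun_nonzero. lra.
  - intros k. pose proof (zero_q_gt1 k). pose proof (zero_q_le k).
    rewrite Cmod_R, Rabs_pos_eq by (left; apply Rinv_0_lt_compat; lra).
    unfold Rdiv. rewrite <- Rinv_mult. apply Rinv_le_contravar; lra.
Qed.
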